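(* Let $N$ be a set of $n$ elements, $v:2^N\to\mathbb{R}_+$ a monotone submodular function with $v(\emptyset)=0$, and $r(S)=\sum_{i\in S}v(\{i\}\mid S\setminus\{i\})$. Let $s>0$ be such that $k=s\cdot H_n$ is a positive integer, where $H_n=\sum_{j=1}^n\frac1j$, and let $S_1,\dots,S_k$ be independent random sets, each sampled by: pick a size $m\in\{1,\dots,n\}$ with probability $(m H_n)^{-1}$, then pick a uniformly random subset of $N$ of size $m$. Then $$\Pr\Big[\max_{i}r(S_i)\ge\frac{v(N)}{2H_n}\Big]\ge1-e^{-s/2}.$$
   Context: Marginal value: $v(\{i\}\mid T)=v(T\cup\{i\})-v(T)$; submodular means $v(S\cup T)+v(S\cap T)\le v(S)+v(T)$ for all $S,T$. *)

From HB Require Import structures.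
From mathcomp Require Import all_boot all_order all_algebra.
From mathcomp Require Import reals.
From mathcomp Require Import sequences exp.
Set Implicit Arguments. Unset Strict Implicit. Unset Printing Implicit Defensive.
Import Order.TTheory GRing.Theory Num.Theory.
Local Open Scope ring_scope.

Section Defs.
Variables (R : realType) (T : finType).

Definition Hnum (n : nat) : R := \sum_(j < n) ((j.+1)%:R)^-1.

Definition marg (v : {set T} -> R) (i : T) (S : {set T}) : R := v (i |: S) - v S.

Definition rfun (v : {set T} -> R) (S : {set T}) : R :=
  \sum_(i in S) marg v i (S :\ i).

Definition monotone_set (v : {set T} -> R) : Prop :=
  forall S U : {set T}, S \subset U -> v S <= v U.

Definition submodular (v : {set T} -> R) : Prop :=
  forall S U : {set T}, v (S :|: U) + v (S :&: U) <= v S + v U.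

(* Probability that the sampling procedure outputs the set S:
   pick m in {1..n} with prob (m H_n)^{-1}, then a uniform subset of size m. *)
Definition sample_prob (S : {set T}) : R :=
  let n := #|T| in
  \sum_(1 <= m < n.+1)
     ((m%:R * Hnum n)^-1 * (if #|S| == m then ('C(n, m)%:R)^-1 else 0)).

Definition prob_indep (k : nat) (E : {ffun 'I_k -> {set T}} -> bool) : R :=
  \sum_(f : {ffun 'I_k -> {set T}} | E f) \prod_(i < k) sample_prob (f i).

End Defs.

(** Each r(S) lies between 0 and v(S) <= v(N): monotonicity gives r >= 0, and
    submodularity (decreasing marginals) gives r(S) <= v(S) by removing the
    elements of S one at a time.  Grouping the sets by size, the expectation
    of r under the sampling distribution telescopes to v(N)/H_n, because
    layer j+1 of r collects (j+1) times the values on layer j+1 minus (n-j)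
    times those on layer j.  Since r <= v(N), a set falls below v(N)/(2H_n)
    with probability q <= 1 - 1/(2H_n), so all k independent samples do with
    probability q^k <= exp(-k/(2H_n)) = exp(-s/2). *)
From HB Require Import structures.
From mathcomp Require Import all_boot all_order all_algebra.
From mathcomp Require Import reals.
From mathcomp Require Import sequences exp.
From mathcomp Require Import lra ring.
Import Order.TTheory GRing.Theory Num.Theory.
Local Open Scope ring_scope.

Section RFunction.
Context {R : realType} {T : finType} {v : {set T} -> R}.

Lemma rfunE (S : {set T}) : rfun v S = \sum_(i in S) (v S - v (S :\ i)).
Proof. by apply: eq_bigr => i iS; rewrite /marg setD1K. Qed.

Lemma rfun_ge0 (S : {set T}) : monotone_set v -> 0 <= rfun v S.
Proof.
move=> mon; apply: sumr_ge0 => i _; rewrite subr_ge0; apply: mon.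
exact: subsetUr.
Qed.

Lemma submodular_setD1 (S : {set T}) i j : submodular v -> i != j ->
  v S - v (S :\ i) <= v (S :\ j) - v (S :\ j :\ i).
Proof.
move=> sub ij; have := sub (S :\ i) (S :\ j).
have -> : (S :\ i) :|: (S :\ j) = S.
  apply/setP => x; rewrite !inE.
  case: (eqVneq x i) => [->|_]; first by rewrite ij.
  by case: (x \in S); rewrite ?andbF.
have -> : (S :\ i) :&: (S :\ j) = S :\ j :\ i.
  by apply/setP => x; rewrite !inE; case: (x \in S); rewrite ?andbT ?andbF.
lra.
Qed.

Lemma rfun_setD1_le (S : {set T}) j : submodular v -> j \in S ->
  rfun v S <= v S - v (S :\ j) + rfun v (S :\ j).
Proof.
move=> sub jS; rewrite rfunE (bigD1 j) //= lerD2l rfunE.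
rewrite [X in _ <= X](eq_bigl (fun i => (i \in S) && (i != j))); last first.
  by move=> i; rewrite !inE andbC.
by apply: ler_sum => i /andP [_ ij]; exact: submodular_setD1.
Qed.

Lemma rfun_le (S : {set T}) : submodular v -> v set0 = 0 -> rfun v S <= v S.
Proof.
move=> sub v0; move: {2}#|S| (erefl #|S|) => n.
elim: n S => [|n IH] S cardS.
  by move/eqP: cardS; rewrite cards_eq0 => /eqP ->; rewrite rfunE big_set0 v0.
have [j jS] : exists j, j \in S by apply/set0Pn; rewrite -card_gt0 cardS.
have cardSj : #|S :\ j| = n.
  by move: (cardsD1 j S); rewrite jS cardS add1n => -[].
apply: le_trans (rfun_setD1_le S j sub jS) _.
by rewrite -[X in _ <= X](subrK (v (S :\ j))) lerD2l IH.
Qed.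

End RFunction.

Section Layers.
Context {V : zmodType} {T : finType} (f : {set T} -> V).

Definition layer_sum (j : nat) : V := \sum_(U : {set T} | #|U| == j) f U.

Lemma layer_sum_card : layer_sum #|T| = f setT.
Proof.
rewrite /layer_sum (eq_bigl (pred1 setT)) ?big_pred1_eq // => U.
by rewrite /= eqEcard subsetT cardsT eqn_leq max_card.
Qed.

Lemma layer_sum0 : layer_sum 0 = f set0.
Proof.
rewrite /layer_sum (eq_bigl (pred1 set0)) ?big_pred1_eq // => U.
by rewrite cards_eq0.
Qed.

Lemma sum_card_mem_setD1 i j :
  \sum_(S : {set T} | (#|S| == j.+1) && (i \in S)) f (S :\ i) =
  \sum_(U : {set T} | (#|U| == j) && (i \notin U)) f U.
Proof.
rewrite (reindex_onto (fun U => i |: U) (fun S => S :\ i)) /=; last first.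
  by move=> S /andP [_ iS]; rewrite setD1K.
apply: eq_big => U; last by move=> /andP [_ /eqP ->].
have [iU|iU] /= := boolP (i \in U); last first.
  by rewrite setU1K // eqxx cardsU1 iU setU11 add1n eqSS !andbT.
rewrite andbF; apply/negbTE; rewrite negb_and orbC; apply/orP; left.
by apply: contraTneq iU => <-; rewrite !inE eqxx.
Qed.

Lemma sum_layer_setD1 j :
  \sum_(S : {set T} | #|S| == j.+1) \sum_(i in S) f (S :\ i) =
  layer_sum j *+ (#|T| - j).
Proof.
transitivity (\sum_(i : T) \sum_(S : {set T} | (#|S| == j.+1) && (i \in S))
                f (S :\ i)).
  by rewrite (exchange_big_dep predT).
transitivity (\sum_(U : {set T} | #|U| == j) \sum_(i in ~: U) f U).
  under eq_bigr => i _ do rewrite sum_card_mem_setD1.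
  rewrite (exchange_big_dep (fun U : {set T} => #|U| == j)) /=; last first.
    by move=> i U _ /andP [].
  by apply: eq_bigr => U cardU; apply: eq_bigl => i; rewrite inE cardU.
rewrite /layer_sum -sumrMnl; apply: eq_bigr => U /eqP cardU.
by rewrite sumr_const -(cardsC U) cardU addKn.
Qed.

End Layers.

Lemma layer_sum_rfun (R : realType) (T : finType) (v : {set T} -> R) j :
  layer_sum (rfun v) j.+1 =
  j.+1%:R * layer_sum v j.+1 - (#|T| - j)%:R * layer_sum v j.
Proof.
rewrite !mulr_natl -sum_layer_setD1 /layer_sum -sumrMnl -sumrB.
by apply: eq_bigr => S /eqP cardS; rewrite rfunE sumrB sumr_const cardS.
Qed.

Lemma Hnum_ge0 (R : realType) n : 0 <= Hnum R n.
Proof. by apply: sumr_ge0 => j _; rewrite invr_ge0. Qed.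

Section Sampling.
Context {R : realType} {T : finType}.
Local Notation n := #|T|.
Local Notation H := (Hnum R #|T|).

Lemma sample_probE (S : {set T}) : sample_prob R S =
  \sum_(j < n)
    (j.+1%:R * H)^-1 * (if #|S| == j.+1 then ('C(n, j.+1)%:R)^-1 else 0).
Proof.
rewrite /sample_prob -{1}[1%N]/(0 + 1)%N big_addn subn1 /= big_mkord.
by apply: eq_bigr => j _; rewrite addn1.
Qed.

Lemma sample_prob_ge0 (S : {set T}) : 0 <= sample_prob R S.
Proof.
rewrite sample_probE; apply: sumr_ge0 => j _; apply: mulr_ge0.
  by rewrite invr_ge0 mulr_ge0 ?Hnum_ge0.
by case: ifP; rewrite ?invr_ge0.
Qed.

Lemma sum_sample_probM (g : {set T} -> R) :
  \sum_(S : {set T}) sample_prob R S * g S =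
  \sum_(j < n) (j.+1%:R * H)^-1 * ('C(n, j.+1)%:R)^-1 * layer_sum g j.+1.
Proof.
under eq_bigr => S _ do rewrite sample_probE mulr_suml.
rewrite exchange_big; apply: eq_bigr => j _.
rewrite /layer_sum [in RHS]big_mkcond [RHS]mulr_sumr; apply: eq_bigr => S _.
by case: ifP; rewrite ?mulr0 ?mul0r // mulrA.
Qed.

Lemma sum_sample_prob : 0 < H -> \sum_(S : {set T}) sample_prob R S = 1.
Proof.
move=> H_gt0; under eq_bigr => S _ do rewrite -[sample_prob R S]mulr1.
rewrite sum_sample_probM.
transitivity (\sum_(j < n) H^-1 * (j.+1%:R)^-1); last first.
  by rewrite -mulr_sumr mulVf ?gt_eqF.
apply: eq_bigr => j _.
have -> : layer_sum (fun _ : {set T} => 1) j.+1 = 'C(n, j.+1)%:R :> R.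
  rewrite /layer_sum.
  rewrite (eq_bigl (fun U => U \in [set U : {set T} | #|U| == j.+1])).
    by rewrite sumr_const card_draws.
  by move=> U; rewrite inE.
by rewrite divfK ?pnatr_eq0 -?lt0n ?bin_gt0 // invfM mulrC.
Qed.

Lemma expected_rfun (v : {set T} -> R) : 0 < H -> v set0 = 0 ->
  \sum_(S : {set T}) sample_prob R S * rfun v S = v setT / H.
Proof.
move=> H_gt0 v0; rewrite sum_sample_probM.
pose a j := layer_sum v j / 'C(n, j)%:R.
transitivity (\sum_(j < n) H^-1 * (a j.+1 - a j)); last first.
  rewrite -mulr_sumr -(big_mkord xpredT (fun j => a j.+1 - a j)).
  rewrite telescope_sumr; last exact: leq0n.
  by rewrite /a layer_sum_card layer_sum0 v0 binn bin0 !divr1 subr0 mulrC.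
apply: eq_bigr => j _; rewrite layer_sum_rfun /a.
have binj1 : ('C(n, j.+1)%:R : R) != 0 by rewrite pnatr_eq0 -lt0n bin_gt0.
have binj : ('C(n, j)%:R : R) != 0 by rewrite pnatr_eq0 -lt0n bin_gt0 ltnW.
have bin_ratio : ((n - j)%:R : R) = j.+1%:R * 'C(n, j.+1)%:R / 'C(n, j)%:R.
  by rewrite -natrM mul_bin_left natrM mulfK.
rewrite bin_ratio; field.
by rewrite binj binj1 gt_eqF // -(natrD R 1 j) add1n pnatr_eq0.
Qed.

End Sampling.

Lemma big_ffun_forall_prod (R : comPzSemiRingType) (I : finType) (k : nat)
    (p : I -> R) (B : pred I) :
  \sum_(f : {ffun 'I_k -> I} | [forall i, B (f i)]) \prod_(i < k) p (f i) =
  (\sum_(x | B x) p x) ^+ k.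
Proof.
rewrite -[in RHS](card_ord k) -prodr_const.
under [RHS]eq_bigr => i _ do rewrite big_mkcond.
rewrite bigA_distr_bigA [LHS]big_mkcond; apply: eq_bigr => f _.
case: ifP => [/forallP Bf|]; first by apply: eq_bigr => i _; rewrite Bf.
move/negbT; rewrite negb_forall => /existsP [i /negbTE Bfi].
by rewrite (bigD1 i) //= Bfi mul0r.
Qed.

Lemma prob_indep_exists {R : realType} {T : finType} k (P : pred {set T}) :
  0 < Hnum R #|T| ->
  prob_indep R (fun f : {ffun 'I_k -> {set T}} => [exists i, P (f i)]) =
  1 - (\sum_(S | ~~ P S) sample_prob R S) ^+ k.
Proof.
move=> H_gt0; rewrite -big_ffun_forall_prod.
have total :
    \sum_(f : {ffun 'I_k -> {set T}}) \prod_(i < k) sample_prob R (f i) = 1.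
  rewrite (eq_bigl (fun f : {ffun 'I_k -> _} => [forall i, predT (f i)])).
    by rewrite big_ffun_forall_prod sum_sample_prob ?expr1n.
  by move=> f; apply/esym/forallP.
under [in RHS]eq_bigl => f do rewrite -negb_exists.
rewrite -[X in _ = X - _]total.
by rewrite (bigID (fun f : {ffun 'I_k -> _} => [exists i, P (f i)])) addrK.
Qed.

Lemma expectation_le_split {R : realDomainType} {I : finType} (p g : I -> R)
    (M t : R) :
  (forall x, 0 <= p x) -> (forall x, g x <= M) ->
  \sum_x p x * g x <=
  t * \sum_(x | g x < t) p x + M * \sum_(x | ~~ (g x < t)) p x.
Proof.
move=> p_ge0 g_le; rewrite (bigID (fun x => g x < t)) !mulr_sumr.
by apply: lerD; apply: ler_sum => x gt; rewrite mulrC ler_wpM2r // ltW.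
Qed.

Lemma exprn_le_expR {R : realType} (q a : R) k :
  0 <= q -> q <= 1 - a -> q ^+ k <= expR (- (k%:R * a)).
Proof.
move=> q_ge0 qa; rewrite -mulrN expRM_natl.
apply: lerXn2r; rewrite ?nnegrE ?expR_ge0 //.
exact: le_trans qa (expR_ge1Dx _).
Qed.

Lemma sample_prob_rfun_lt_le (R : realType) (T : finType) (v : {set T} -> R) :
  let H := Hnum R #|T| in
  monotone_set v -> submodular v -> v set0 = 0 -> 0 < H -> 0 < v setT ->
  \sum_(S | rfun v S < v setT / (2 * H)) sample_prob R S <= 1 - (2 * H)^-1.
Proof.
move=> H mon sub v0 H_gt0 vT_gt0.
set M := v setT; set t := M / (2 * H); set q := \sum_(S | _) _.
have rfun_le_M S : rfun v S <= M.
  exact: le_trans (rfun_le S sub v0) (mon _ _ (subsetT S)).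
have total := sum_sample_prob H_gt0.
rewrite (bigID (fun S => rfun v S < t)) /= -/q in total.
have q_le1 : q <= 1.
  rewrite -total lerDl; apply: sumr_ge0 => S _; exact: sample_prob_ge0.
have := expectation_le_split (@sample_prob R T) (rfun v) M t
  sample_prob_ge0 rfun_le_M.
rewrite expected_rfun // -/M -/q -[X in _ + M * X](addKr q) total.
have cM_gt0 : 0 < (2 * H)^-1 * M by rewrite mulr_gt0 // invr_gt0 mulr_gt0.
have -> : M / H = 2 * ((2 * H)^-1 * M) by field; rewrite gt_eqF.
rewrite /t [M / _]mulrC => expected_le.
have : (2 * H)^-1 * M <= (1 - q) * M by nra.
by rewrite ler_pM2r // => ?; lra.
Qed.

Theorem mainTheorem17 (R : realType) (T : finType) (v : {set T} -> R)
  (s : R) (k : nat) :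
  (forall S, 0 <= v S) ->
  monotone_set v -> submodular v -> v set0 = 0 ->
  0 < s -> (0 < k)%N -> k%:R = s * Hnum R #|T| ->
  prob_indep R (fun f : {ffun 'I_k -> {set T}} =>
      [exists i, v [set: T] / (2 * Hnum R #|T|) <= rfun v (f i)])
  >= 1 - expR (- (s / 2)).
Proof.
move=> v_ge0 mon sub v0 _ k_gt0 kE.
set H := Hnum R #|T|.
have H_gt0 : 0 < H.
  rewrite lt_def Hnum_ge0 andbT; apply: contraTneq k_gt0 => H0.
  by move: kE; rewrite -/H H0 mulr0 => /eqP; rewrite pnatr_eq0 => /eqP ->.
rewrite (prob_indep_exists _ (fun S => v setT / (2 * H) <= rfun v S)) //.
rewrite lerD2l lerN2.
set q := \sum_(S | _) _.
have [vT0|vT_gt0] := eqVneq (v setT) 0.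
  rewrite /q big_pred0 ?expr0n ?gtn_eqF ?expR_ge0 // => S.
  by rewrite vT0 mul0r rfun_ge0.
have q_le : q <= 1 - (2 * H)^-1.
  rewrite /q; under eq_bigl => S do rewrite -ltNge.
  by apply: sample_prob_rfun_lt_le; rewrite // lt_def vT_gt0 v_ge0.
have -> : s / 2 = k%:R * (2 * H)^-1 by rewrite kE -/H; field; rewrite gt_eqF.
apply: exprn_le_expR q_le; apply: sumr_ge0 => S _; exact: sample_prob_ge0.
Qed.
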